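(* Let $K\in\{\mathbb{Q}_2(\sqrt{-1}),\mathbb{Q}_2(\sqrt{-5})\}$, $d=2m$ with $m$ odd, $m\ge3$, and $f=a_1x_1^d+\dots+a_sx_s^d$ with all $a_i\in\mathcal{O}\setminus\{0\}$. Suppose that at some level, $f$ has at least five variables all with the same $\pi$-coefficient, or at least six variables with at least three variables having $\pi$-coefficient $0$ and at least three having $\pi$-coefficient $1$. Then $f$ has a nontrivial zero in $K$.
   Context: $\mathcal{O}$ is the ring of integers of $K$ and $\pi$ the uniformizer: $\pi=1+\sqrt{-1}$ for $\mathbb{Q}_2(\sqrt{-1})$ and $\pi=1+\sqrt{-5}$ for $\mathbb{Q}_2(\sqrt{-5})$. Each unit $u$ has a unique expansion $u=c_0+c_1\pi+c_2\pi^2+\cdots$ with $c_j\in\{0,1\}$, $c_0=1$. Writing $a_i=\pi^r u$ with $u$ a unit, the variable $x_i$ is at level $r\bmod d$ (levels are residues modulo $d$), and its $\pi$-coefficient is $c_1$ of $u$. A nontrivial zero is a point of $K^s$, not all coordinates zero, where $f$ vanishes. *)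

(* K = Q_2(sqrt D), D in {-1,-5}; its ring of integers is
   O = Z_2[sqrt D], realised as the inverse limit of Z[sqrt D] / 2^n. *)
From mathcomp Require Import all_boot all_algebra.
Set Implicit Arguments. Unset Strict Implicit. Unset Printing Implicit Defensive.
Import GRing.Theory Num.Theory.
Local Open Scope ring_scope.

(* Elements a + b sqrt D of Z[sqrt D] as pairs (a, b). *)
Definition zi := (int * int)%type.
Definition zadd (p q : zi) : zi := (p.1 + q.1, p.2 + q.2).
Definition zopp (p : zi) : zi := (- p.1, - p.2).
Definition zmul (D : int) (p q : zi) : zi :=
  (p.1 * q.1 + D * (p.2 * q.2), p.1 * q.2 + p.2 * q.1).
Fixpoint zexp (D : int) (p : zi) (k : nat) : zi :=
  match k with 0%N => (1, 0) | k'.+1 => zmul D p (zexp D p k') end.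
Definition zcong (n : nat) (p q : zi) : Prop :=
  ((2%:Z ^+ n) %| (p.1 - q.1))%Z /\ ((2%:Z ^+ n) %| (p.2 - q.2))%Z.

(* An element of O is a coherent sequence x n in Z[sqrt D] / 2^n. *)
Definition Oseq := nat -> zi.
Definition inO (x : Oseq) : Prop := forall n, zcong n (x n.+1) (x n).
Definition eqO (x y : Oseq) : Prop := forall n, zcong n (x n) (y n).
Definition Ocst (c : zi) : Oseq := fun _ => c.
Definition O0 : Oseq := Ocst (0, 0).
Definition O1 : Oseq := Ocst (1, 0).
Definition Oadd (x y : Oseq) : Oseq := fun n => zadd (x n) (y n).
Definition Oopp (x : Oseq) : Oseq := fun n => zopp (x n).
Definition Omul (D : int) (x y : Oseq) : Oseq := fun n => zmul D (x n) (y n).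
Definition Oexp (D : int) (x : Oseq) (k : nat) : Oseq := fun n => zexp D (x n) k.
Definition Opi : Oseq := Ocst (1, 1).

Definition Ounit (D : int) (u : Oseq) : Prop :=
  exists v, inO v /\ eqO (Omul D u v) O1.

(* The pi-coefficient c_1 of the unit u (expansion u = 1 + c_1 pi + c_2 pi^2 + ...,
   c_j in {0,1}) equals c iff u - (1 + c pi) is divisible by pi^2 in O. *)
Definition pi_coeff (D : int) (u : Oseq) (c : bool) : Prop :=
  exists w, inO w /\
    eqO (Oadd u (Oopp (Oadd O1 (if c then Opi else O0)))) (Omul D (Oexp D Opi 2) w).

Definition at_level (D : int) (d : nat) (a : Oseq) (l : nat) (c : bool) : Prop :=
  exists (r : nat) (u : Oseq),
    (r %% d = l)%N /\ inO u /\ Ounit D u /\ eqO a (Omul D (Oexp D Opi r) u) /\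
    pi_coeff D u c.

Definition diag_form (D : int) (d s : nat) (a x : 'I_s -> Oseq) : Oseq :=
  fun n => \big[zadd/(0, 0)]_(i < s) zmul D (a i n) (zexp D (x i n) d).

From HB Require Import structures.
From mathcomp Require Import all_boot all_algebra.
From mathcomp Require Import ring zify.
Import GRing.Theory Num.Theory.
Local Open Scope ring_scope.
Set Implicit Arguments. Unset Strict Implicit. Unset Printing Implicit Defensive.

(* The variables of a common level l are rescaled by powers of pi^d so that all their
   coefficients get the same valuation l; this leaves a diagonal form sum u_j x_j^d with unit
   coefficients.  Modulo 8, a unit is determined up to the square of a unit by its
   pi-coefficient and one of four representatives, and x^d = x^2 for units x since x^4 = 1
   (d = 2m, m odd).  A finite computation shows that five representatives with a common
   pi-coefficient, or three of each kind, always admit a zero modulo 8 with a unit entry.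
   As d u x^(d-1) is exactly divisible by 2, Hensel's lemma lifts such a zero from 2^3 to
   an exact zero. *)

(** * The ring Z[sqrt D] and congruences modulo powers of 2 *)

(* zi carries the product ring structure of int * int; zsqrt D is the same carrier with the
   multiplication of Z[sqrt D], so every ring expression must be typed at zsqrt D. *)
Definition zsqrt (D : int) : Type := (int * int)%type.
HB.instance Definition _ D := GRing.Zmodule.copy (zsqrt D) (int * int)%type.

Section ZsqrtRing.
Variable D : int.
Local Notation R := (zsqrt D).

Lemma zsqrt_eq (p q : R) : p.1 = q.1 -> p.2 = q.2 -> p = q.
Proof. by case: p q => ? ? [? ?] /= -> ->. Qed.

Lemma zmulA : associative (zmul D).
Proof. by move=> [a b] [c e] [f g]; apply: zsqrt_eq; rewrite /zmul /=; ring. Qed.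
Lemma zmulC : commutative (zmul D).
Proof. by move=> [a b] [c e]; apply: zsqrt_eq; rewrite /zmul /=; ring. Qed.
Lemma zmul1 : left_id ((1, 0) : R) (zmul D).
Proof. by move=> [a b]; apply: zsqrt_eq; rewrite /zmul /=; ring. Qed.
Lemma zmulDl : left_distributive (zmul D) (+%R : R -> R -> R).
Proof. by move=> [a b] [c e] [f g]; apply: zsqrt_eq; rewrite /zmul /=; ring. Qed.
Lemma zsqrt_one_neq0 : ((1, 0) : R) != 0.
Proof. by []. Qed.
End ZsqrtRing.

HB.instance Definition _ D := GRing.Zmodule_isComNzRing.Build (zsqrt D)
  (@zmulA D) (@zmulC D) (@zmul1 D) (@zmulDl D) (@zsqrt_one_neq0 D).

Lemma zexpE D (p : zi) k : zexp D p k = (p : zsqrt D) ^+ k.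
Proof. by elim: k => [|k IH] //=; rewrite exprS -IH. Qed.

Section PowerOfTwoDivisibility.
Variable D : int.
Local Notation R := (zsqrt D).

Definition dvd2X n (z : R) := exists f : R, z = 2%:R ^+ n * f.

Lemma natr2X n : (2%:R ^+ n : R) = (2%:Z ^+ n, 0).
Proof.
elim: n => [|n IH] //; rewrite exprS IH.
by apply: zsqrt_eq; rewrite /= /zmul /= ?exprS; ring.
Qed.

Lemma mul2X n (f : R) : 2%:R ^+ n * f = ((2%:Z ^+ n * f.1, 2%:Z ^+ n * f.2) : R).
Proof. by rewrite natr2X; apply: zsqrt_eq; rewrite /=; ring. Qed.

Lemma zcongE n (p q : zi) : zcong n p q <-> dvd2X n ((p : R) - q).
Proof.
split=> [[h1 h2] | [f]].
  exists (((p.1 - q.1) %/ 2%:Z ^+ n)%Z, ((p.2 - q.2) %/ 2%:Z ^+ n)%Z).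
  by rewrite mul2X; apply: zsqrt_eq; rewrite /= mulrC divzK.
by rewrite mul2X => /pair_equal_spec[E1 E2]; split; [move: E1 | move: E2] => /= ->;
  apply: dvdz_mulr.
Qed.

Lemma dvd2X0 n : dvd2X n 0.
Proof. by exists 0; rewrite mulr0. Qed.
Lemma dvd2XD n x y : dvd2X n x -> dvd2X n y -> dvd2X n (x + y).
Proof. by case=> f -> [g ->]; exists (f + g); rewrite mulrDr. Qed.
Lemma dvd2XN n x : dvd2X n x -> dvd2X n (- x).
Proof. by case=> f ->; exists (- f); rewrite mulrN. Qed.
Lemma dvd2XB n x y : dvd2X n x -> dvd2X n y -> dvd2X n (x - y).
Proof. by move=> hx /dvd2XN; apply: dvd2XD. Qed.
Lemma dvd2XMl n x y : dvd2X n y -> dvd2X n (x * y).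
Proof. by case=> f ->; exists (x * f); rewrite mulrCA. Qed.
Lemma dvd2XMr n x y : dvd2X n x -> dvd2X n (x * y).
Proof. by rewrite mulrC; apply: dvd2XMl. Qed.
Lemma dvd2XM a b x y : dvd2X a x -> dvd2X b y -> dvd2X (a + b) (x * y).
Proof. by case=> f -> [g ->]; exists (f * g); rewrite exprD; ring. Qed.
Lemma dvd2X_leq k n x : (k <= n)%N -> dvd2X n x -> dvd2X k x.
Proof. by move=> /subnK <- [f ->]; exists (2%:R ^+ (n - k) * f); rewrite exprD; ring. Qed.
Lemma dvd2X_sum n (I : finType) (P : pred I) (F : I -> R) :
  (forall i, P i -> dvd2X n (F i)) -> dvd2X n (\sum_(i | P i) F i).
Proof. by move=> h; apply: big_ind => //; [exact: dvd2X0 | exact: dvd2XD]. Qed.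

Lemma dvd2X_subrr n x : dvd2X n (x - x).
Proof. by rewrite subrr; apply: dvd2X0. Qed.
Lemma dvd2X_subC n x y : dvd2X n (x - y) -> dvd2X n (y - x).
Proof. by move/dvd2XN; rewrite opprB. Qed.
Lemma dvd2X_subtrans n x y z : dvd2X n (x - y) -> dvd2X n (y - z) -> dvd2X n (x - z).
Proof. by move=> h1 /(dvd2XD h1); rewrite addrA subrK. Qed.
Lemma dvd2X_subM n x x' y y' :
  dvd2X n (x - x') -> dvd2X n (y - y') -> dvd2X n (x * y - x' * y').
Proof.
move=> h1 h2; have -> : x * y - x' * y' = (x - x') * y + x' * (y - y') by ring.
by apply: dvd2XD; [apply: dvd2XMr | apply: dvd2XMl].
Qed.
Lemma dvd2X_subX n k x y : dvd2X n (x - y) -> dvd2X n (x ^+ k - y ^+ k).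
Proof.
move=> h; elim: k => [|k IH]; first exact: dvd2X_subrr.
by rewrite !exprS; apply: dvd2X_subM.
Qed.

Lemma dvd2X_mul2X k n w : dvd2X (k + n) (2%:R ^+ k * w) -> dvd2X n w.
Proof.
case=> f; rewrite exprD -mulrA => E; exists f.
have k2 : 2%:Z ^+ k != 0 by rewrite expf_neq0.
move: E; rewrite !mul2X => /pair_equal_spec[E1 E2].
by apply: zsqrt_eq; apply: (mulfI k2).
Qed.

Definition coherent (x : nat -> R) := forall n, dvd2X n (x n.+1 - x n).

Lemma coherent_dvd2X x n k : coherent x -> (n <= k)%N -> dvd2X n (x k - x n).
Proof.
move=> hx; elim: k => [|k IH]; first by rewrite leqn0 => /eqP ->; exact: dvd2X_subrr.
rewrite leq_eqVlt => /orP[/eqP -> | lt]; first exact: dvd2X_subrr.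
apply: (dvd2X_subtrans (y := x k)); last by apply: IH; rewrite -ltnS.
exact: dvd2X_leq (hx k).
Qed.

Lemma inO_coherent (x : Oseq) : inO x -> coherent (fun n => (x n : R)).
Proof. by move=> hx n; apply/zcongE. Qed.

(* The units of O/2 = F_2[pi]/(pi^2) are exactly its elements of square 1. *)
Definition unit_mod2 (x : R) := dvd2X 1 (x * x - 1).

Lemma unit_mod2M x y : unit_mod2 x -> unit_mod2 y -> unit_mod2 (x * y).
Proof.
rewrite /unit_mod2 => hx hy.
have -> : x * y * (x * y) - 1 = (x * x - 1) * (y * y) + (y * y - 1) by ring.
by apply: dvd2XD => //; apply: dvd2XMr.
Qed.
Lemma unit_mod2X x k : unit_mod2 x -> unit_mod2 (x ^+ k).
Proof.
move=> hx; elim: k => [|k IH]; last by rewrite exprS; apply: unit_mod2M.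
by rewrite /unit_mod2 expr0 mulr1; exact: dvd2X_subrr.
Qed.
Lemma unit_mod2_cong x y : dvd2X 1 (x - y) -> unit_mod2 x -> unit_mod2 y.
Proof.
move=> h hx; rewrite /unit_mod2.
have -> : y * y - 1 = (x * x - 1) - (x * y - y * y) - (x * x - x * y) by ring.
by apply: dvd2XB; [apply: dvd2XB => //|]; apply: dvd2X_subM => //; apply: dvd2X_subrr.
Qed.
Lemma unit_mod2_not_dvd2 y : unit_mod2 y -> ~ dvd2X 1 y.
Proof.
move=> hu hy; have : dvd2X 1 (y * y - (y * y - 1)) by apply: dvd2XB => //; apply: dvd2XMl.
rewrite opprB addrC subrK => -[f]; rewrite mul2X => /(congr1 fst) /= E.
by have := dvdz_mulr f.1 (dvdzz (2%:Z ^+ 1)); rewrite -E.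
Qed.

End PowerOfTwoDivisibility.

(** * Hensel's lemma for x |-> u x^(2m), m odd *)

Lemma exprD_first_order (R : comNzRingType) (y h : R) N : exists w : R,
  (y + h) ^+ N.+1 = y ^+ N.+1 + N.+1%:R * y ^+ N * h + h ^+ 2 * w.
Proof.
elim: N => [|N [w IH]]; first by exists 0; rewrite !expr1 expr0; ring.
exists (N.+1%:R * y ^+ N + (y + h) * w).
by rewrite -natr1 [in LHS]exprS IH (exprS y N.+1) (exprS y N); ring.
Qed.

Section Hensel.
Variables (D : int) (m : nat) (u T : nat -> zsqrt D) (s : zsqrt D).
Local Notation R := (zsqrt D).
Local Notation d := (2 * m)%N.
Hypotheses (m_odd : odd m) (u_coh : coherent u) (T_coh : coherent T).
Hypotheses (u_unit : forall n, unit_mod2 (u n.+1)) (s_unit : unit_mod2 s).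
Hypothesis s_root_mod8 : dvd2X 3 (u 3 * s ^+ d - T 3).

Definition divz2X k (z : R) : R := ((z.1 %/ 2%:Z ^+ k)%Z, (z.2 %/ 2%:Z ^+ k)%Z).

Lemma divz2XK k z : dvd2X k z -> z = 2%:R ^+ k * divz2X k z.
Proof.
have k2 : 2%:Z ^+ k != 0 by rewrite expf_neq0.
by case=> f E; rewrite mul2X; apply: zsqrt_eq; rewrite /= E mul2X /= mulKz.
Qed.

Definition hensel_defect k y := u k * y ^+ d - T k.

(* Newton step: u y^(d-1) is a unit modulo 2 and d = 2m, so adding 2^(k+2) f u y^(d-1)
   to y kills a defect 2^(k+3) f modulo 2^(k+4). *)
Definition newton_lift k y :=
  y + 2%:R ^+ k.+2 * (divz2X k.+3 (hensel_defect k.+4 y) * (u k.+4 * y ^+ d.-1)).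

Lemma hensel_defectS k y :
  dvd2X k (hensel_defect k y) -> dvd2X k (hensel_defect k.+1 y).
Proof.
move=> h; have -> : hensel_defect k.+1 y =
  hensel_defect k y + ((u k.+1 - u k) * y ^+ d - (T k.+1 - T k)) by rewrite /hensel_defect; ring.
by apply: dvd2XD => //; apply: dvd2XB; [apply: dvd2XMr |].
Qed.

Lemma newton_lift_spec k y : dvd2X k.+3 (hensel_defect k.+3 y) -> unit_mod2 y ->
  [/\ dvd2X k.+4 (hensel_defect k.+4 (newton_lift k y)), unit_mod2 (newton_lift k y)
    & dvd2X k.+2 (newton_lift k y - y)].
Proof.
move=> /hensel_defectS /divz2XK Ef hy.
set f := divz2X _ _ in Ef; set w := u k.+4 * y ^+ d.-1; set t := f * w.
have hw : unit_mod2 w by apply: unit_mod2M; [exact: u_unit | exact: unit_mod2X].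
have d_pos : (0 < d)%N by rewrite muln_gt0 /=; case: (m) m_odd.
have [z Ez] := exprD_first_order y (2%:R ^+ k.+2 * t) d.-1.
rewrite prednK // in Ez.
rewrite /newton_lift -/f -/w -/t; split.
- have -> : hensel_defect k.+4 (y + 2%:R ^+ k.+2 * t) = hensel_defect k.+4 y
      + u k.+4 * (d%:R * y ^+ d.-1 * (2%:R ^+ k.+2 * t) + (2%:R ^+ k.+2 * t) ^+ 2 * z).
    by rewrite /hensel_defect Ez; ring.
  have -> : hensel_defect k.+4 y
      + u k.+4 * (d%:R * y ^+ d.-1 * (2%:R ^+ k.+2 * t) + (2%:R ^+ k.+2 * t) ^+ 2 * z) =
     2%:R ^+ k.+3 * f * (1 + m%:R * (w * w)) + 2%:R ^+ k.+4 * (2%:R ^+ k * (u k.+4 * t ^+ 2 * z)).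
    by rewrite Ef natrM /t /w !exprS; ring.
  apply: dvd2XD; last by eexists.
  rewrite -addn1; apply: dvd2XM; first by exists f.
  have -> : 1 + m%:R * (w * w) = (1 + m%:R) + m%:R * (w * w - 1) :> R by ring.
  apply: dvd2XD; last exact: dvd2XMl.
  exists (1 + (m./2)%:R).
  by rewrite -[in LHS](odd_double_half m) m_odd natrD -muln2 natrM /=; ring.
- rewrite /unit_mod2; have -> : (y + 2%:R ^+ k.+2 * t) * (y + 2%:R ^+ k.+2 * t) - 1 =
    (y * y - 1) + 2%:R ^+ 1 * (2%:R ^+ k.+1 * t * (2%:R * y + 2%:R ^+ k.+2 * t)) :> R.
    by rewrite !exprS; ring.
  by apply: dvd2XD => //; eexists.
- by exists t; ring.
Qed.

Fixpoint newton_seq k := if k is k'.+1 then newton_lift k' (newton_seq k') else s.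

Lemma newton_seq_spec k :
  dvd2X k.+3 (hensel_defect k.+3 (newton_seq k)) /\ unit_mod2 (newton_seq k).
Proof.
elim: k => [|k [h1 h2]]; first by [].
by have [] := newton_lift_spec h1 h2.
Qed.

Lemma hensel : exists y : nat -> R,
  [/\ coherent y, forall n, dvd2X n (u n * y n ^+ d - T n) & forall n, unit_mod2 (y n)].
Proof.
exists newton_seq; split=> n; have [h1 h2] := newton_seq_spec n => //.
- have [_ _] := newton_lift_spec h1 h2.
  by apply: dvd2X_leq; rewrite leqW.
- have -> : u n * newton_seq n ^+ d - T n = hensel_defect n.+3 (newton_seq n)
    - (u n.+3 - u n) * newton_seq n ^+ d + (T n.+3 - T n) by rewrite /hensel_defect; ring.
  have n_le : (n <= n.+3)%N by rewrite !leqW.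
  apply: dvd2XD; last exact: coherent_dvd2X.
  apply: dvd2XB; first exact: dvd2X_leq n_le h1.
  by apply: dvd2XMr; apply: coherent_dvd2X.
Qed.

End Hensel.

(** * The uniformizer pi = 1 + sqrt D *)

Definition one_plus_pi (c : bool) : zi := if c then (2, 1) else (1, 0).

Section Uniformizer.
Variable D : int.
Hypothesis HD : D = -1 \/ D = -5.
Local Notation R := (zsqrt D).

Definition piz : R := (1, 1).

Lemma not_dvd2_pi : ~ dvd2X 1 piz.
Proof.
case=> f; rewrite mul2X => /(congr1 fst) /= E.
by have := dvdz_mulr f.1 (dvdzz (2%:Z ^+ 1)); rewrite -E.
Qed.

Lemma dvd2_pi2 : dvd2X 1 (piz * piz).
Proof. by case: HD => ->; [exists (0, 1) | exists (-2, 1)]. Qed.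

Lemma unit_mod2_one_plus_pi c : unit_mod2 (one_plus_pi c : R).
Proof.
case: c; last by rewrite /unit_mod2 mulr1; apply: dvd2X_subrr.
by case: HD => ->; [exists (1, 2) | exists (-1, 2)].
Qed.

Lemma one_plus_pi_inj_mod2 c c' :
  dvd2X 1 ((one_plus_pi c : R) - one_plus_pi c') -> c = c'.
Proof.
have pi_odd : ~ dvd2X 1 (- piz) by move/dvd2XN; rewrite opprK; apply: not_dvd2_pi.
by case: c; case: c' => h; [| case: (not_dvd2_pi h) | case: (pi_odd h) |].
Qed.

Lemma not_unit_mod2_piM w v : unit_mod2 v -> ~ dvd2X 1 (piz * w - v).
Proof.
move=> hv h; apply: not_dvd2_pi.
have h1 : dvd2X 1 (piz * w * v - 1).
  have -> : piz * w * v - 1 = (piz * w - v) * v + (v * v - 1) by ring.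
  by apply: dvd2XD => //; apply: dvd2XMr.
have -> : piz = (piz * piz) * (w * v) - piz * (piz * w * v - 1) by ring.
by apply: dvd2XB; [apply: dvd2XMr; exact: dvd2_pi2 | apply: dvd2XMl].
Qed.

Lemma dvd2X_piX_cancel r z : dvd2X r.+1 (piz ^+ r * z) -> dvd2X 1 z.
Proof.
move=> h.
(* (1 + sqrt D) (1 - sqrt D) = 1 - D is twice an odd integer *)
have [q [Eq q_odd]] : exists q : R, piz * (1, -1) = 2%:R * q /\ dvd2X 1 (q - 1).
  case: HD => ->; first by exists 1; split; [apply: zsqrt_eq | apply: dvd2X_subrr].
  by exists (3, 0); split; [apply: zsqrt_eq | exists 1; apply: zsqrt_eq].
have : dvd2X (r + 1) (2%:R ^+ r * (q ^+ r * z)).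
  have -> : 2%:R ^+ r * (q ^+ r * z) = ((1, -1) : R) ^+ r * (piz ^+ r * z).
    by rewrite mulrA -exprMn -Eq exprMn; ring.
  by rewrite addn1; apply: dvd2XMl.
move/dvd2X_mul2X => hqz.
have -> : z = q ^+ r * z - (q ^+ r - 1 ^+ r) * z by rewrite expr1n; ring.
by apply: dvd2XB => //; apply: dvd2XMr; apply: dvd2X_subX.
Qed.

Lemma piX_unit_eq_mod r r' v v' : unit_mod2 v -> unit_mod2 v' ->
  dvd2X (maxn r r').+1 (piz ^+ r * v - piz ^+ r' * v') -> r = r' /\ dvd2X 1 (v - v').
Proof.
wlog le_rr' : r r' v v' / (r <= r')%N.
  move=> hwlog hv hv' h; case: (leqP r r') => [|/ltnW] le; first exact: hwlog.
  rewrite maxnC in h; have [-> hvv'] := hwlog r' r v' v le hv' hv (dvd2X_subC h).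
  by split=> //; apply: dvd2X_subC.
move=> hv hv' h; have /dvd2X_leq /(_ h) : (r.+1 <= (maxn r r').+1)%N by rewrite ltnS leq_maxl.
rewrite -(subnKC le_rr') exprD -mulrA -mulrBr => /dvd2X_piX_cancel.
case: (r' - r)%N => [|k] hvv'; first by rewrite addn0 expr0 mul1r in hvv' *.
rewrite exprS -mulrA in hvv'.
by case: (not_unit_mod2_piM hv (dvd2X_subC hvv')).
Qed.

End Uniformizer.

Section Levels.
Variables (D : int) (d : nat).
Hypothesis HD : D = -1 \/ D = -5.
Local Notation R := (zsqrt D).

Lemma at_level_approx a l c : at_level D d a l c ->
  exists r (u : nat -> R), [/\ (r %% d = l)%N, coherent u,
    forall n, dvd2X n ((a n : R) - piz D ^+ r * u n)
    & forall n, dvd2X 1 (u n.+1 - one_plus_pi c)].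
Proof.
case=> r [u [hr [hu [_ [ha [w [_ hpc]]]]]]]; exists r, (fun n => u n : R); split=> // n.
- exact: inO_coherent.
- by move/(zcongE D): (ha n); rewrite /Omul /Oexp zexpE.
- move/(zcongE D): (hpc n.+1); rewrite /Omul /Oexp zexpE => h.
  have {}h := dvd2X_leq (ltn0Sn n) h.
  have -> : (u n.+1 : R) - one_plus_pi c =
    ((u n.+1 : R) - one_plus_pi c - piz D ^+ 2 * w n.+1) + piz D ^+ 2 * w n.+1 by ring.
  by apply: dvd2XD; [by case: (c) h | apply: dvd2XMr; rewrite expr2; apply: dvd2_pi2].
Qed.

Lemma at_level_coeff_uniq a l c c' :
  at_level D d a l c -> at_level D d a l c' -> c = c'.
Proof.
move=> /at_level_approx [r [u [_ _ ha hu]]] /at_level_approx [r' [u' [_ _ ha' hu']]].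
set n := maxn r r'.
have hv : unit_mod2 (u n.+1).
  by apply: unit_mod2_cong (unit_mod2_one_plus_pi HD c); apply: dvd2X_subC.
have hv' : unit_mod2 (u' n.+1).
  by apply: unit_mod2_cong (unit_mod2_one_plus_pi HD c'); apply: dvd2X_subC.
have [_ huu'] : r = r' /\ dvd2X 1 (u n.+1 - u' n.+1).
  exact: (piX_unit_eq_mod HD hv hv' (dvd2X_subtrans (dvd2X_subC (ha n.+1)) (ha' n.+1))).
apply: (@one_plus_pi_inj_mod2 D).
have -> : (one_plus_pi c : R) - one_plus_pi c' =
  (u n.+1 - u' n.+1) - (u n.+1 - one_plus_pi c) + (u' n.+1 - one_plus_pi c') by ring.
by apply: dvd2XD; first apply: dvd2XB.
Qed.

End Levels.

(** * Units and zero sums modulo 8 *)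

Definition ofN (a b : nat) : zi := (a%:Z, b%:Z).

Lemma residue_mod8 D (x : zsqrt D) :
  exists a b, [/\ (a < 8)%N, (b < 8)%N & dvd2X 3 (x - ofN a b)].
Proof.
have mod8 (z : int) : exists2 a, (a < 8)%N & z = a%:Z + 8 * (z %/ 8)%Z.
  exists `|(z %% 8)%Z|%N; last by rewrite gez0_abs ?modz_ge0 // addrC mulrC -divz_eq.
  by rewrite -ltz_nat gez0_abs ?modz_ge0 // ltz_pmod.
have [a ha Ea] := mod8 x.1; have [b hb Eb] := mod8 x.2.
exists a, b; split=> //; exists ((x.1 %/ 8)%Z, (x.2 %/ 8)%Z).
by rewrite mul2X; apply: zsqrt_eq => /=; [rewrite {1}Ea | rewrite {1}Eb]; ring.
Qed.

Definition zcongb n (p q : zi) : bool :=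
  (2%:Z ^+ n %| p.1 - q.1)%Z && (2%:Z ^+ n %| p.2 - q.2)%Z.

Lemma zcongbP D n (p q : zi) : reflect (dvd2X n ((p : zsqrt D) - q)) (zcongb n p q).
Proof. by apply: (iffP andP) => [[? ?] | /(zcongE D) [? ?]]; [apply/(zcongE D) | ]. Qed.

Definition residues8 : seq zi := [seq ofN a b | a <- iota 0 8, b <- iota 0 8].

Lemma residues8_all D (P : pred zi) (x : zsqrt D) :
  all P residues8 -> exists2 y, P y & dvd2X 3 (x - y).
Proof.
move=> /allP hP; have [a [b [ha hb hx]]] := residue_mod8 x.
by exists (ofN a b) => //; apply/hP/allpairs_f; rewrite mem_iota.
Qed.

(* Their squares are the squares of all units modulo 8. *)
Definition unit_sqrts : seq zi := [:: (1, 0); (0, 1); (1, 2); (2, 1)].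

(* Representatives, up to squares of units, of the units with pi-coefficient c modulo 8. *)
Definition class_reps (D : int) (c : bool) : seq zi :=
  if c then [:: (0, 1); (0, if D == -1 then 3 else 5); (2, 1); (2, if D == -1 then 5 else 3)]
  else [:: (1, 0); (1, 2); (1, 4); (1, 6)].

Definition unit_sqrts_check D : bool := all (fun t => zcongb 1 (zmul D t t) (1, 0)) unit_sqrts.

Definition fourth_power_check D : bool :=
  all (fun x => zcongb 1 (zmul D x x) (1, 0) ==> zcongb 3 (zexp D x 4) (1, 0)) residues8.

Definition square_class_check D c : bool :=
  all (fun x => zcongb 1 x (one_plus_pi c) ==>
    has (fun r => has (fun t => zcongb 3 (zmul D x (zmul D t t)) r) unit_sqrts) (class_reps D c))
  residues8.

Fixpoint first_some A B (f : A -> option B) (s : seq A) : option B :=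
  if s is x :: s' then if f x is Some y then Some y else first_some f s' else None.

Definition res8 (z : zi) : nat * nat := (`|(z.1 %% 8)%Z|%N, `|(z.2 %% 8)%Z|%N).

Fixpoint find_zero_sum (opts : seq (seq (zi * (nat * nat)))) (acc : nat * nat) (nz : bool) :=
  if opts is o :: opts' then
    first_some (fun tv : zi * (nat * nat) => omap (cons tv.1) (find_zero_sum opts'
      ((acc.1 + tv.2.1) %% 8, (acc.2 + tv.2.2) %% 8)%N (nz || (tv.1 != (0, 0))))) o
  else if nz && (acc == (0, 0)%N) then Some [::] else None.

Definition zero_sum_mod8 D (rs ts : seq zi) : bool :=
  [&& size ts == size rs, all (mem ((0, 0) :: unit_sqrts)) ts, has (fun t => t != (0, 0)) ts
    & zcongb 3 (foldr zadd (0, 0) [seq zmul D p.1 (zmul D p.2 p.2) | p <- zip rs ts]) (0, 0)].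

Fixpoint cart T (ss : seq (seq T)) : seq (seq T) :=
  if ss is s :: ss' then [seq x :: t | x <- s, t <- cart ss'] else [:: [::]].

Definition rep_options D (r : zi) : seq (zi * (nat * nat)) :=
  [seq (t, res8 (zmul D r (zmul D t t))) | t <- (0, 0) :: unit_sqrts].

(* find_zero_sum is an untrusted search on residues; only its answer, rechecked by
   zero_sum_mod8, matters. *)
Definition zero_sum_table D (cs : seq bool) : bool :=
  all (fun ros => if find_zero_sum (unzip2 ros) (0, 0)%N false is Some ts
                  then zero_sum_mod8 D (unzip1 ros) ts else false)
    (cart [seq [seq (r, rep_options D r) | r <- class_reps D c] | c <- cs]).

Lemma mem_cart_map (I T : eqType) (f : I -> T) (F : I -> seq T) (s : seq I) :
  (forall i, f i \in F i) -> map f s \in cart (map F s).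
Proof. by move=> hf; elim: s => //= i s IH; apply: allpairs_f. Qed.

Lemma foldr_zadd_zip D (rs ts : seq zi) n : size rs = n -> size ts = n ->
  foldr zadd (0, 0) [seq zmul D p.1 (zmul D p.2 p.2) | p <- zip rs ts] =
  \sum_(i < n) (nth (0, 0) rs i : zsqrt D) * (nth (0, 0) ts i : zsqrt D) ^+ 2.
Proof.
move=> sr st.
transitivity (foldr +%R 0 [seq p.1 * (p.2 * p.2) | p : zsqrt D * zsqrt D <- zip rs ts]) => //.
elim: n rs ts sr st => [|n IH] [|r rs] [|t ts] //=; first by rewrite big_ord0.
by move=> [sr] [st]; rewrite big_ord_recl (IH _ _ sr st) expr2.
Qed.

Lemma mod8_checks D : D = -1 \/ D = -5 ->
  [&& unit_sqrts_check D, fourth_power_check D, square_class_check D false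
    & square_class_check D true].
Proof. by case=> ->; vm_compute. Qed.

Section Mod8.
Variable D : int.
Hypothesis HD : D = -1 \/ D = -5.
Local Notation R := (zsqrt D).

Lemma unit_mod2_sqrts t : t \in unit_sqrts -> unit_mod2 (t : R).
Proof.
have /and4P[/allP h _ _ _] := mod8_checks HD.
by move=> /h /(zcongbP D).
Qed.

Lemma unit_pow4 (x : R) : unit_mod2 x -> dvd2X 3 (x ^+ 4 - 1).
Proof.
have /and4P[_ /(residues8_all x) [y /implyP y4 xy] _ _] := mod8_checks HD.
move=> /(unit_mod2_cong (dvd2X_leq (isT : (1 <= 3)%N) xy)) /(zcongbP D) /y4 /(zcongbP D).
rewrite zexpE => y4_1.
by apply: dvd2X_subtrans y4_1; apply: dvd2X_subX.
Qed.

Lemma unit_pow_double_odd m (x : R) : odd m -> unit_mod2 x -> dvd2X 3 (x ^+ (2 * m) - x ^+ 2).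
Proof.
move=> m_odd /unit_pow4 x4.
have -> : (2 * m = 2 + 4 * m./2)%N by rewrite -[in LHS](odd_double_half m) m_odd -muln2; lia.
have -> : x ^+ (2 + 4 * m./2) - x ^+ 2 = x ^+ 2 * ((x ^+ 4) ^+ m./2 - 1 ^+ m./2).
  by rewrite expr1n exprD exprM; ring.
by apply: dvd2XMl; apply: dvd2X_subX.
Qed.

Lemma square_class_mod8 c (x : R) : dvd2X 1 (x - one_plus_pi c) ->
  exists r t, [/\ r \in class_reps D c, t \in unit_sqrts & dvd2X 3 (x * ((t : R) * t) - r)].
Proof.
move=> hx; have /and4P[_ _ h0 h1] := mod8_checks HD.
have /(residues8_all x) [y /implyP hy xy] : square_class_check D c by case: (c).
have /hy : zcongb 1 y (one_plus_pi c).
  by apply/(zcongbP D); apply: dvd2X_subtrans hx; apply/dvd2X_subC/(dvd2X_leq _ xy).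
case/hasP=> r rc /hasP [t ht /(zcongbP D) yt]; exists r, t; split=> //.
by apply: dvd2X_subtrans yt; apply: dvd2X_subM => //; apply: dvd2X_subrr.
Qed.

Lemma zero_sum_mod8_witness cs (r : 'I_(size cs) -> zi) :
  zero_sum_table D cs -> (forall j, r j \in class_reps D (nth false cs j)) ->
  exists e : 'I_(size cs) -> zi, [/\ forall j, e j \in (0, 0) :: unit_sqrts,
    exists j, e j != (0, 0) & dvd2X 3 (\sum_j (r j : R) * (e j : R) ^+ 2)].
Proof.
move=> /allP table hr; set rs := [seq r j | j <- enum 'I_(size cs)].
have size_rs : size rs = size cs by rewrite size_map size_enum_ord.
have csE : [seq nth false cs (val j) | j <- enum 'I_(size cs)] = cs.
  by rewrite (map_comp (nth false cs) val) val_enum_ord map_nth_iota0 // take_size.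
have /table : [seq (r j, rep_options D (r j)) | j <- enum 'I_(size cs)] \in
    cart [seq [seq (r, rep_options D r) | r <- class_reps D c] | c <- cs].
  rewrite -[in X in _ \in cart X]csE -map_comp.
  by apply: mem_cart_map => j; apply: map_f; apply: hr.
have -> : unzip1 [seq (r j, rep_options D (r j)) | j <- enum 'I_(size cs)] = rs.
  by rewrite /unzip1 -map_comp.
case: find_zero_sum => [ts|] // /and4P[/eqP size_ts /allP ts_mem /hasP[t t_ts t_nz]].
have size_ts' := etrans size_ts size_rs.
move=> /(zcongbP D); rewrite subr0 (foldr_zadd_zip D size_rs size_ts') => hsum.
exists (fun j => nth (0, 0) ts j); split.
- by move=> j; apply/ts_mem/mem_nth; rewrite size_ts'.
- have [j j_lt tE] := nthP (0, 0) t_ts; rewrite size_ts' in j_lt.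
  by exists (Ordinal j_lt); rewrite /= tE.
- move: hsum; congr dvd2X; apply: eq_bigr => j _.
  by rewrite (nth_map j) ?size_enum_ord ?nth_ord_enum.
Qed.

Lemma unit_sum_mod8 m cs (rho : 'I_(size cs) -> R) : odd m -> zero_sum_table D cs ->
  (forall j, dvd2X 1 (rho j - one_plus_pi (nth false cs j))) ->
  exists (S : 'I_(size cs) -> R) j0,
    unit_mod2 (S j0) /\ dvd2X 3 (\sum_j rho j * S j ^+ (2 * m)).
Proof.
move=> m_odd table /(_ _)/square_class_mod8 hrho.
have /fin_all_exists [rt /all_and3 [r_rep t_unit hrt]] :
    forall j : 'I_(size cs), exists rt : zi * zi,
    [/\ rt.1 \in class_reps D (nth false cs j), rt.2 \in unit_sqrts
      & dvd2X 3 (rho j * ((rt.2 : R) * rt.2) - rt.1)].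
  by move=> j; have [r [t []]] := hrho j; exists (r, t).
have [e [e_mem [j0 e_nz] hsum]] := zero_sum_mod8_witness table r_rep.
have e_unit j : e j != (0, 0) -> unit_mod2 (e j : R).
  by move: (e_mem j); rewrite inE => /orP[/eqP -> /eqP | /unit_mod2_sqrts].
pose S j : R := ((rt j).2 : R) * (e j : R).
have S_unit j : e j != (0, 0) -> unit_mod2 (S j).
  by move=> /e_unit; rewrite /S; apply: unit_mod2M (unit_mod2_sqrts (t_unit j)).
have S_pow j : dvd2X 3 (S j ^+ (2 * m) - S j ^+ 2).
  have [e0 | /S_unit /(unit_pow_double_odd m_odd) //] := eqVneq (e j) (0, 0).
  have -> : S j = 0 by rewrite /S e0 mulr0.
  have d_nz : (2 * m != 0)%N by rewrite muln_eq0 /=; case: (m) m_odd.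
  by rewrite expr0n (negbTE d_nz) expr2 mulr0 subrr; apply: dvd2X0.
exists S, j0; split; first exact: S_unit.
(* rho_j S_j^d = rho_j S_j^2 = (rho_j t_j^2) e_j^2 = r_j e_j^2 modulo 8 *)
have -> : \sum_j rho j * S j ^+ (2 * m) = \sum_j (rho j * (S j ^+ (2 * m) - S j ^+ 2)
    + (rho j * (((rt j).2 : R) * (rt j).2) - (rt j).1) * (e j : R) ^+ 2)
    + \sum_j ((rt j).1 : R) * (e j : R) ^+ 2.
  by rewrite -big_split /=; apply: eq_bigr => j _; rewrite /S; ring.
apply: dvd2XD => //; apply: dvd2X_sum => j _.
by apply: dvd2XD; [apply: dvd2XMl | apply: dvd2XMr].
Qed.

End Mod8.

Lemma zero_sum_table5 D c : D = -1 \/ D = -5 -> zero_sum_table D (nseq 5 c).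
Proof. by case=> ->; case: c; vm_compute. Qed.

Lemma zero_sum_table33 D : D = -1 \/ D = -5 -> zero_sum_table D (nseq 3 false ++ nseq 3 true).
Proof. by case=> ->; vm_compute. Qed.

(** * Solving the diagonal form *)

Lemma diag_form_zero_of_subfamily D d s n (a : 'I_s -> Oseq) (g : 'I_n -> 'I_s)
    (X : 'I_n -> nat -> zsqrt D) j0 :
  (0 < d)%N -> injective g -> (forall j, coherent (X j)) -> ~ (forall k, dvd2X k (X j0 k)) ->
  (forall k, dvd2X k (\sum_j (a (g j) k : zsqrt D) * X j k ^+ d)) ->
  exists x : 'I_s -> Oseq,
    (forall i, inO (x i)) /\ (exists i, ~ eqO (x i) O0) /\ eqO (diag_form D d a x) O0.
Proof.
move=> d_pos g_inj X_coh X_nz hsum.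
pose x i : Oseq := if [pick j | g j == i] is Some j then X j else O0.
have xg j : x (g j) = X j.
  by rewrite /x; case: pickP => [j' /eqP /g_inj -> // | /(_ j)]; rewrite eqxx.
have x0 i : i \notin [set g j | j in 'I_n] -> x i = O0.
  by rewrite /x; case: pickP => // j /eqP <-; rewrite imset_f.
exists x; split; [|split].
- move=> i k; apply/(zcongE D); rewrite /x; case: pickP => [j _ | _]; first exact: X_coh.
  exact: dvd2X_subrr.
- by exists (g j0); rewrite xg => X0; apply: X_nz => k; move/(zcongE D): (X0 k); rewrite subr0.
- move=> k; apply/(zcongE D); rewrite subr0.
  have -> : (diag_form D d a x k : zsqrt D) = \sum_i (a i k : zsqrt D) * (x i k : zsqrt D) ^+ d.
    by apply: eq_bigr => i _; rewrite zexpE.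
  rewrite (bigID (mem [set g j | j in 'I_n])) /= [X in _ + X]big1 ?addr0; last first.
    by move=> i /x0 ->; rewrite expr0n gtn_eqF // mulr0.
  by rewrite big_imset /=; [under eq_bigr do rewrite xg | move=> j1 j2 _ _ /g_inj].
Qed.

Section Core.
Variables (D : int) (m : nat).
Hypotheses (HD : D = -1 \/ D = -5) (m_odd : odd m).
Local Notation R := (zsqrt D).
Local Notation d := (2 * m)%N.

Lemma unit_sum_solvable cs (u : 'I_(size cs) -> nat -> R) :
  zero_sum_table D cs -> (forall j, coherent (u j)) ->
  (forall j k, dvd2X 1 (u j k.+1 - one_plus_pi (nth false cs j))) ->
  exists (Y : 'I_(size cs) -> nat -> R) j0, [/\ forall j, coherent (Y j),
    forall k, unit_mod2 (Y j0 k) & forall k, dvd2X k (\sum_j u j k * Y j k ^+ d)].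
Proof.
move=> table u_coh u_pi.
have [S [j0 [S_unit hS]]] := unit_sum_mod8 HD m_odd table (fun j => u_pi j 2%N).
(* Hensel's lemma in the variable j0, the other variables being frozen at S j *)
pose T k := - \sum_(j | j != j0) u j k * S j ^+ d.
have T_coh : coherent T.
  move=> k; rewrite /T opprK addrC -sumrB; apply: dvd2X_sum => j _.
  by rewrite -mulrBl; apply/dvd2XMr/dvd2X_subC/u_coh.
have u0_unit k : unit_mod2 (u j0 k.+1).
  exact: unit_mod2_cong (dvd2X_subC (u_pi j0 k)) (unit_mod2_one_plus_pi HD _).
have root8 : dvd2X 3 (u j0 3 * S j0 ^+ d - T 3) by move: hS; rewrite (bigD1 j0) //= /T opprK.
have [y [y_coh y_root y_unit]] := hensel m_odd (u_coh j0) T_coh u0_unit S_unit root8.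
exists (fun j k => if j == j0 then y k else S j), j0; split=> [j k | k | k].
- by case: eqP => _; [exact: y_coh | exact: dvd2X_subrr].
- by rewrite eqxx.
- rewrite (bigD1 j0) //= eqxx (eq_bigr (fun j => u j k * S j ^+ d)) => [|j /negbTE -> //].
  by move: (y_root k); rewrite /T opprK.
Qed.

Lemma solution_of_levels s (a : 'I_s -> Oseq) l n (g : 'I_n -> 'I_s) (r : 'I_n -> nat)
    (u Y : 'I_n -> nat -> R) j0 :
  injective g -> (forall j, r j %% d = l)%N ->
  (forall j k, dvd2X k ((a (g j) k : R) - piz D ^+ r j * u j k)) ->
  (forall j, coherent (Y j)) -> (forall k, unit_mod2 (Y j0 k)) ->
  (forall k, dvd2X k (\sum_j u j k * Y j k ^+ d)) ->
  exists x : 'I_s -> Oseq,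
    (forall i, inO (x i)) /\ (exists i, ~ eqO (x i) O0) /\ eqO (diag_form D d a x) O0.
Proof.
move=> g_inj r_mod a_approx Y_coh Y_unit hsum.
have d_pos : (0 < d)%N by rewrite muln_gt0; case: (m) m_odd.
(* With r_j = l + q_j d, x_j = pi^(K - q_j) y_j gives every a_j x_j^d the valuation l + K d. *)
pose K := \max_j (r j %/ d)%N.
have rK j : (r j + (K - r j %/ d) * d = l + K * d)%N.
  rewrite {1}(divn_eq (r j) d) r_mod addnAC -mulnDl subnKC 1?addnC //.
  exact: (leq_bigmax j).
pose X j k := piz D ^+ (K - r j %/ d) * Y j k.
apply: (@diag_form_zero_of_subfamily _ _ _ _ a g X j0) => //.
- by move=> j k; rewrite -mulrBr; apply/dvd2XMl/Y_coh.
- move=> X0; apply: (unit_mod2_not_dvd2 (Y_unit (K - r j0 %/ d).+1)).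
  by apply: (dvd2X_piX_cancel HD); apply: X0.
- move=> k.
  have -> : \sum_j (a (g j) k : R) * X j k ^+ d =
      \sum_j ((a (g j) k : R) - piz D ^+ r j * u j k) * X j k ^+ d
      + piz D ^+ (l + K * d) * \sum_j u j k * Y j k ^+ d.
    rewrite mulr_sumr -big_split; apply: eq_bigr => j _ /=.
    by rewrite /X exprMn -exprM -(rK j) exprD; ring.
  by apply: dvd2XD; [apply: dvd2X_sum => j _; apply: dvd2XMr | apply: dvd2XMl].
Qed.

End Core.

Lemma solvable_of_levels D m s (a : 'I_s -> Oseq) l cs (g : 'I_(size cs) -> 'I_s) :
  D = -1 \/ D = -5 -> odd m -> zero_sum_table D cs -> injective g ->
  (forall j, at_level D (2 * m) (a (g j)) l (nth false cs j)) ->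
  exists x : 'I_s -> Oseq,
    (forall i, inO (x i)) /\ (exists i, ~ eqO (x i) O0) /\ eqO (diag_form D (2 * m) a x) O0.
Proof.
move=> HD m_odd table g_inj /(_ _)/(at_level_approx HD) levels.
have /fin_all_exists [r /fin_all_exists [u /all_and4 [r_mod u_coh a_approx u_pi]]] := levels.
have [Y [j0 [Y_coh Y_unit hsum]]] := unit_sum_solvable HD m_odd table u_coh u_pi.
exact: (solution_of_levels HD m_odd g_inj r_mod a_approx Y_coh Y_unit hsum).
Qed.

Lemma set_injection (T : finType) k (S : {set T}) : (k <= #|S|)%N ->
  exists g : 'I_k -> T, injective g /\ forall j, g j \in S.
Proof.
move=> le_kS; exists (fun j => enum_val (widen_ord le_kS j)); split=> [j1 j2 | j].
  by move=> /enum_val_inj /(congr1 val) /= /val_inj.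
exact: enum_valP.
Qed.

Lemma split_injective (T : eqType) m n (f : 'I_m -> T) (g : 'I_n -> T) :
  injective f -> injective g -> (forall i j, f i != g j) ->
  injective (fun k : 'I_(m + n) => match split k with inl i => f i | inr j => g j end).
Proof.
move=> f_inj g_inj fg k1 k2; rewrite -[k1]splitK -[k2]splitK.
case: (split k1) => [i1|j1]; case: (split k2) => [i2|j2]; rewrite !unsplitK.
- by move/f_inj ->.
- by move=> E; have := fg i1 j2; rewrite E eqxx.
- by move=> E; have := fg i2 j1; rewrite E eqxx.
- by move/g_inj ->.
Qed.

Theorem lemma10 (D : int) (m d s : nat) (a : 'I_s -> Oseq) :
  (D = -1 \/ D = -5) ->
  odd m -> (3 <= m)%N -> d = (2 * m)%N ->
  (forall i, inO (a i) /\ ~ eqO (a i) O0) ->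
  (exists l : nat, (l < d)%N /\
     ((exists (c : bool) (S : {set 'I_s}),
          (5 <= #|S|)%N /\ (forall i, i \in S -> at_level D d (a i) l c))
      \/
      (exists S0 S1 : {set 'I_s},
          (3 <= #|S0|)%N /\ (3 <= #|S1|)%N /\
          (forall i, i \in S0 -> at_level D d (a i) l false) /\
          (forall i, i \in S1 -> at_level D d (a i) l true)))) ->
  exists x : 'I_s -> Oseq,
    (forall i, inO (x i)) /\ (exists i, ~ eqO (x i) O0) /\
    eqO (diag_form D d a x) O0.
Proof.
move=> HD m_odd _ -> _ [l [_ [[c [S [hS HS]]] | [S0 [S1 [h0 [h1 [HS0 HS1]]]]]]]].
  have [g [g_inj gS]] := set_injection hS.
  apply: (solvable_of_levels HD m_odd (zero_sum_table5 c HD) g_inj) => j.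
  have j_lt5 : (j < 5)%N := ltn_ord j.
  by rewrite nth_nseq j_lt5; apply/HS/gS.
have [g0 [g0_inj g0S]] := set_injection h0; have [g1 [g1_inj g1S]] := set_injection h1.
have g01 i j : g0 i != g1 j.
  by apply/eqP=> E; have := HS1 _ (g1S j); rewrite -E => /(at_level_coeff_uniq HD (HS0 _ (g0S i))).
apply: (solvable_of_levels HD m_odd (zero_sum_table33 HD) (split_injective g0_inj g1_inj g01)) => k.
rewrite nth_cat size_nseq; case: splitP => [i | j] ->.
  by rewrite ltn_ord nth_nseq ltn_ord; apply/HS0/g0S.
have -> : (3 + j < 3)%N = false by rewrite ltnNge leq_addr.
by rewrite addKn nth_nseq ltn_ord; apply/HS1/g1S.
Qed.
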